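(* Let $\mathcal{R}$ be a finite valuation ring with residue field of cardinality $q$ and with uniformizer of nilpotency degree $r$ (so $|\mathcal{R}|=q^r$), and let $\mathcal{R}^*$ denote its group of units. Let $G$ be a subgroup of $\mathcal{R}^*$, let $g,h\colon G\to\mathcal{R}^*$ be arbitrary functions, and define $f\colon G\times\mathcal{R}^*\to\mathcal{R}$ by $f(x,y)=g(x)(h(x)+y)$. Put $m=\mu(g\cdot h)$, where $(g\cdot h)(x)=g(x)h(x)$. Then there is a constant $c>0$ depending only on $r$ such that for all sets $A\subset G$ and $B,C\subset\mathcal{R}^*$, \[|f(A,B)|\,|B\cdot C|\ \ge\ c\min\left\{\frac{q^r|B|}{m},\ \frac{|A||B|^2|C|}{m^2q^{2r-1}}\right\}.\]
   Context: A finite valuation ring is a finite commutative ring with identity that is local (has a unique maximal ideal) and principal (every ideal is principal); its maximal ideal is generated by a non-unit $z$ (a uniformizer), the residue field $\mathcal{R}/(z)$ has $q$ elements, and $r$ is the least integer with $z^r=0$. For a function $\varphi\colon G\to\mathcal{R}$, $\mu(\varphi)=\max_{t\in\mathcal{R}}|\{x\in G:\varphi(x)=t\}|$. Notation: $f(A,B)=\{f(x,y):x\in A,y\in B\}$ and $B\cdot C=\{bc:b\in B,c\in C\}$. *)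

From HB Require Import structures.
From mathcomp Require Import all_boot all_order all_algebra all_fingroup.
Set Implicit Arguments. Unset Strict Implicit. Unset Printing Implicit Defensive.
Import Order.TTheory GRing.Theory Num.Theory.
Local Open Scope ring_scope.

Section Defs.
Variable R : finComUnitRingType.

Definition is_ideal (I : {set R}) : Prop :=
  [/\ 0 \in I, (forall x y, x \in I -> y \in I -> x + y \in I)
    & (forall a x, x \in I -> a * x \in I)].

Definition pideal (a : R) : {set R} := [set b * a | b : R].

Definition maximal_ideal (M : {set R}) : Prop :=
  [/\ is_ideal M, M != [set: R]
    & forall J, is_ideal J -> M \subset J -> J = M \/ J = [set: R]].

Definition local_ring : Prop :=
  exists M, maximal_ideal M /\ forall M', maximal_ideal M' -> M' = M.

Definition principal_ring : Prop :=
  forall I, is_ideal I -> exists a, I = pideal a.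

Definition finite_valuation_ring : Prop := local_ring /\ principal_ring.

Definition uniformizer (z : R) : Prop := maximal_ideal (pideal z).

(* cardinality of the residue ring R/(z): the number of cosets x + (z) *)
Definition residue_card (z : R) : nat :=
  #|[set [set x + y | y in pideal z] | x : R]|.

Definition nil_degree (z : R) (r : nat) : Prop :=
  z ^+ r = 0 /\ forall k, (k < r)%N -> z ^+ k != 0.
End Defs.

Definition mu (gT : finType) (T : finType) (G : {set gT}) (phi : gT -> T) : nat :=
  \max_(t : T) #|[set x in G | phi x == t]|.

From HB Require Import structures.
From mathcomp Require Import all_boot all_order all_algebra all_fingroup.
From mathcomp Require Import ring lra zify.
Import Order.TTheory GRing.Theory Num.Theory.

(* Each triple (x, b, c) in A x B x C is an incidence between the point
   (g(x)(h(x) + b), bc) of f(A,B) x BC and the line u = (g(x)/c) v + g(x)h(x)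
   of R x R.  A line determines g(x)h(x), and c once x is known, so it comes
   from at most m pairs (x, c): there are N >= |A||C|/m lines, carrying
   I >= N|B| incidences.  Two lines whose slopes differ by a unit meet at most once, and the nonunits
   form the maximal ideal (z) of size q^(r-1); this bounds the second moment of
   the number of lines through a point, and Cauchy-Schwarz over the point set P
   gives (q^r I - |P| N)^2 <= |P| q^(3r) N q^(r-1).  Comparing I with
   2|P|N/q^r yields the two terms of the minimum, with c = 1/4. *)

Set Implicit Arguments. Unset Strict Implicit. Unset Printing Implicit Defensive.

Lemma sum_bool_card (T : finType) (A : {pred T}) (P : pred T) :
  (\sum_(x in A) (P x : nat))%N = #|[set x in A | P x]|.
Proof.
rewrite -[RHS]sum1_card [RHS](eq_bigl (fun x => (x \in A) && P x)); last first.
  by move=> x; rewrite inE.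
by rewrite big_mkcondr; apply: eq_bigr => x _; case: (P x).
Qed.

Lemma card_by_fibres (T U : finType) (f : T -> U) (D : {set T}) k :
  (forall x, x \in D -> #|[set y in D | f y == f x]| = k) ->
  #|D| = (#|f @: D| * k)%N.
Proof.
move=> fibre_k; rewrite -sum1_card (partition_big_imset f) /= -sum_nat_const.
apply: eq_bigr => _ /imsetP[x Dx ->].
by rewrite -(fibre_k x Dx) -sum1_card; apply: eq_bigl => y; rewrite inE.
Qed.

Lemma card_le_by_fibres (T U : finType) (f : T -> U) (D : {set T}) k :
  (forall x, x \in D -> #|[set y in D | f y == f x]| <= k)%N ->
  (#|D| <= #|f @: D| * k)%N.
Proof.
move=> fibre_k; rewrite -sum1_card (partition_big_imset f) /= -sum_nat_const.
apply: leq_sum => _ /imsetP[x Dx ->].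
rewrite sum1_card; apply: leq_trans (fibre_k x Dx); apply: subset_leq_card.
by apply/subsetP => y; rewrite !inE.
Qed.

Local Open Scope ring_scope.

Section Ideals.
Variable R : finComUnitRingType.

Definition idealb (J : {set R}) : bool :=
  [&& 0 \in J, [forall x, forall y, (x \in J) ==> (y \in J) ==> (x + y \in J)]
    & [forall a, forall x, (x \in J) ==> (a * x \in J)]].

Lemma idealbP J : reflect (is_ideal J) (idealb J).
Proof.
apply: (iffP idP).
  case/and3P=> J0 /forallP JD /forallP JM; split=> // [x y Jx Jy|a x Jx].
    by move/forallP: (JD x) => /(_ y); rewrite Jx Jy.
  by move/forallP: (JM a) => /(_ x); rewrite Jx.
case=> J0 JD JM; rewrite /idealb J0 /=; apply/andP; split.
  by apply/forallP=> x; apply/forallP=> y; do 2!apply/implyP=> ?; apply: JD.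
by apply/forallP=> a; apply/forallP=> x; apply/implyP=> ?; apply: JM.
Qed.

Lemma pideal0 (a : R) : 0 \in pideal a.
Proof. by apply/imsetP; exists 0; rewrite ?mul0r. Qed.

Lemma pidealD (a x y : R) : x \in pideal a -> y \in pideal a -> x + y \in pideal a.
Proof.
by move=> /imsetP[u _ ->] /imsetP[v _ ->]; apply/imsetP; exists (u + v); rewrite ?mulrDl.
Qed.

Lemma pidealB (a x y : R) : x \in pideal a -> y \in pideal a -> x - y \in pideal a.
Proof.
by move=> /imsetP[u _ ->] /imsetP[v _ ->]; apply/imsetP; exists (u - v); rewrite ?mulrBl.
Qed.

Lemma pideal_is_ideal (a : R) : is_ideal (pideal a).
Proof.
split; [exact: pideal0 | exact: pidealD |].
by move=> b _ /imsetP[u _ ->]; apply/imsetP; exists (b * u); rewrite ?mulrA.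
Qed.

Lemma mem_pideal (a : R) : a \in pideal a.
Proof. by apply/imsetP; exists 1; rewrite ?mul1r. Qed.

Lemma pidealT : pideal (1 : R) = [set: R].
Proof. by apply/setP=> u; rewrite inE; apply/imsetP; exists u; rewrite ?mulr1. Qed.

Lemma pideal_0 : pideal (0 : R) = [set 0].
Proof.
apply/setP=> u; rewrite inE; apply/imsetP/eqP => [[b _ ->]|->]; first by rewrite mulr0.
by exists 0; rewrite ?mulr0.
Qed.

Lemma ideal_eqT (J : {set R}) : is_ideal J -> 1 \in J -> J = [set: R].
Proof.
by case=> _ _ JM J1; apply/setP=> a; rewrite inE; have := JM a 1 J1; rewrite mulr1.
Qed.

Lemma pideal_nonunit (a : R) : a \isn't a GRing.unit -> 1 \notin pideal a.
Proof.
move=> a_nonunit; apply/negP=> /imsetP[b _ b_inv]; move/negP: a_nonunit; apply.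
by apply/unitrPr; exists b; rewrite mulrC.
Qed.

Lemma nonunit_in_maximal_ideal (a : R) : a \isn't a GRing.unit ->
  exists2 M, maximal_ideal M & a \in M.
Proof.
move=> a_nonunit.
pose proper J := [&& idealb J, pideal a \subset J & 1 \notin J].
have proper_a : proper (pideal a).
  by rewrite /proper subxx pideal_nonunit // !andbT; apply/idealbP/pideal_is_ideal.
have [M] := @arg_maxnP _ (pideal a) proper (fun J => #|J|) proper_a.
case/and3P=> /idealbP idealM aM M1 M_max; exists M; last exact: subsetP aM _ (mem_pideal a).
split=> // [|J idealJ MJ]; first by apply: contraNneq M1 => ->; rewrite inE.
have [J1|J1] := boolP (1 \in J); first by right; apply: ideal_eqT.
left; apply/eqP; rewrite eq_sym eqEcard MJ /=; apply: M_max.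
by rewrite /proper J1 andbT (subset_trans aM MJ) andbT; apply/idealbP.
Qed.

Lemma nonunit_in_uniformizer_ideal (z a : R) :
  local_ring R -> uniformizer z -> a \isn't a GRing.unit -> a \in pideal z.
Proof.
move=> [M0 [_ uniqM]] Mz /nonunit_in_maximal_ideal[M maxM aM].
by rewrite (uniqM _ Mz) -(uniqM _ maxM).
Qed.

End Ideals.

Section Counting.
Variable R : finComUnitRingType.

Definition ann (w : R) : {set R} := [set a | a * w == 0].

Lemma card_mulr_image (D : {set R}) (w : R) :
  (forall x y, x \in D -> y \in D -> x + y \in D) ->
  (forall x y, x \in D -> y \in D -> x - y \in D) ->
  ann w \subset D ->
  #|D| = (#|[set (a * w)%R | a in D]| * #|ann w|)%N.
Proof.
move=> DD DB annD; apply: card_by_fibres => x Dx.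
have -> : [set y in D | y * w == x * w] = [set a + x | a in ann w].
  apply/setP=> y; rewrite inE; apply/andP/imsetP => [[Dy /eqP yx]|[a a0 ->]].
    by exists (y - x); rewrite ?subrK // inE mulrBl yx subrr.
  split; first by apply: DD; first exact: subsetP annD _ a0.
  by move: a0; rewrite inE mulrDl => /eqP ->; rewrite add0r.
by rewrite card_imset //; apply: addIr.
Qed.

Lemma card_residue_mul (z : R) : #|[set: R]| = (residue_card z * #|pideal z|)%N.
Proof.
pose coset x := [set x + y | y in pideal z].
have coset_eq x y : (coset y == coset x) = (y - x \in pideal z).
  apply/eqP/idP => [coset_yx|zyx].
    have : y \in coset x by rewrite -coset_yx; apply/imsetP; exists 0; rewrite ?addr0 ?pideal0.
    by case/imsetP=> a za ->; rewrite addrC addKr.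
  apply/setP=> u; apply/imsetP/imsetP => -[a za ->].
    by exists (y - x + a); [apply: pidealD | ring].
  by exists (a - (y - x)); [apply: pidealB | ring].
rewrite /residue_card (_ : [set _ | x : R] = coset @: [set: R]); last first.
  by apply/setP=> S; apply/imsetP/imsetP => -[x _ ->]; exists x.
apply: card_by_fibres => x _.
have -> : [set y in [set: R] | coset y == coset x] = [set a + x | a in pideal z].
  apply/setP=> y; rewrite !inE coset_eq; apply/idP/imsetP => [zyx|[a za ->]].
    by exists (y - x); rewrite ?subrK.
  by rewrite addrK.
by rewrite card_imset //; apply: addIr.
Qed.

End Counting.

Section ValuationRing.
Variables (R : finComUnitRingType) (z : R) (r : nat).
Hypotheses (R_local : local_ring R) (z_unif : uniformizer z) (z_nil : nil_degree z r).

Let q := residue_card z.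

Lemma nil_degree_gt0 : (0 < r)%N.
Proof.
by case: z_nil; case: r => // /eqP; rewrite expr0 oner_eq0.
Qed.

Lemma ann_sub_pideal (k : nat) : (k < r)%N -> ann (z ^+ k) \subset pideal z.
Proof.
move=> lt_kr; apply/subsetP=> a; rewrite inE => /eqP azk0.
have [a_unit|a_nonunit] := boolP (a \is a GRing.unit).
  by case: z_nil => _ /(_ k lt_kr); rewrite -(mulKr a_unit (z ^+ k)) azk0 mulr0 eqxx.
exact: nonunit_in_uniformizer_ideal.
Qed.

Lemma card_pideal_expS (k : nat) : (k < r)%N ->
  #|pideal (z ^+ k)| = (q * #|pideal (z ^+ k.+1)|)%N.
Proof.
move=> lt_kr.
have cardT := @card_mulr_image R [set: R] (z ^+ k)
  (fun _ _ _ _ => in_setT _) (fun _ _ _ _ => in_setT _) (subsetT _).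
have cardZ := card_mulr_image (@pidealD R z) (@pidealB R z) (ann_sub_pideal lt_kr).
rewrite (_ : [set _ | a in [set: R]] = pideal (z ^+ k)) in cardT; last first.
  by apply/setP=> u; apply/imsetP/imsetP => -[a _ ->]; exists a.
rewrite (_ : [set _ | a in pideal z] = pideal (z ^+ k.+1)) in cardZ; last first.
  apply/setP=> u; apply/imsetP/imsetP => [[_ /imsetP[b _ ->] ->]|[b _ ->]].
    by exists b; rewrite // exprS mulrA.
  by exists (b * z); [apply/imsetP; exists b | rewrite exprS mulrA].
have ann_gt0 : (0 < #|ann (z ^+ k)|)%N by apply/card_gt0P; exists 0; rewrite inE mul0r.
apply/eqP; rewrite -(eqn_pmul2r ann_gt0) -mulnA -cardZ -cardT.
by rewrite (card_residue_mul z).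
Qed.

Lemma card_pideal_exp (j : nat) : (j <= r)%N -> #|pideal (z ^+ (r - j))| = (q ^ j)%N.
Proof.
elim: j => [|j IHj] le_jr; first by case: z_nil; rewrite subn0 => -> _; rewrite pideal_0 cards1.
rewrite card_pideal_expS; last lia.
rewrite expnS -IHj; last lia.
by congr (_ * #|pideal (z ^+ _)|)%N; lia.
Qed.

Lemma card_valuation_ring : #|[set: R]| = (q ^ r)%N.
Proof. by rewrite -card_pideal_exp // subnn expr0 pidealT. Qed.

Lemma card_uniformizer_ideal : #|pideal z| = (q ^ r.-1)%N.
Proof.
have := nil_degree_gt0; rewrite -card_pideal_exp; last lia.
by move=> r_gt0; rewrite (_ : (r - r.-1 = 1)%N) //; lia.
Qed.

End ValuationRing.

Section Incidences.
Variable R : finComUnitRingType.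

(* The pair l = (s, t) encodes the line u = s v + t of points p = (u, v). *)
Definition incident (l p : R * R) : bool := p.1 == l.1 * p.2 + l.2.

Definition degree (L : {set R * R}) (p : R * R) : nat := (\sum_(l in L) incident l p)%N.

Lemma sum_incident_line (l : R * R) : (\sum_p incident l p)%N = #|[set: R]|.
Proof.
rewrite sum_bool_card.
have -> : [set p in predT | incident l p] = [set (l.1 * v + l.2, v) | v in [set: R]].
  apply/setP=> -[u v]; rewrite !inE /incident /=; apply/eqP/imsetP => [->|[w _ [-> ->]]] //.
  by exists v; rewrite ?inE.
by rewrite card_imset // => v w [].
Qed.

Lemma sum_degree (L : {set R * R}) : (\sum_p degree L p)%N = (#|L| * #|[set: R]|)%N.
Proof.
rewrite exchange_big /= -sum_nat_const; apply: eq_bigr => l _; exact: sum_incident_line.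
Qed.

Lemma card_meet_le1 (l l' : R * R) : l'.1 - l.1 \is a GRing.unit ->
  (#|[set p | incident l p && incident l' p]| <= 1)%N.
Proof.
move=> slope_unit; apply/card_le1_eqP => -[u v] [u' v']; rewrite !inE /incident /=.
case/andP=> /eqP lu /eqP l'u /andP[/eqP lu' /eqP l'u'].
have meet_v w : l.1 * w + l.2 = l'.1 * w + l'.2 -> w = (l'.1 - l.1)^-1 * (l.2 - l'.2).
  move=> lw; apply: (mulrI slope_unit); rewrite mulrA mulrV // mul1r.
  transitivity ((l'.1 * w + l'.2) - (l.1 * w + l.2) + (l.2 - l'.2)); first by ring.
  by rewrite -lw subrr add0r.
have vv' : v = v' by rewrite (meet_v v) -?lu -?l'u // (meet_v v') -?lu' -?l'u'.
by rewrite lu lu' vv'.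
Qed.

Variable M : {set R}.
Hypothesis nonunit_in_M : forall x, x \isn't a GRing.unit -> x \in M.

Lemma card_pencil (s : R) (p : R * R) :
  #|[set l' | (l'.1 - s \in M) && incident l' p]| = #|M|.
Proof.
have -> : [set l' | (l'.1 - s \in M) && incident l' p] =
          [set (s + a, p.1 - (s + a) * p.2) | a in M].
  apply/setP=> -[s' t']; rewrite inE /incident /=; apply/andP/imsetP.
    case=> Ma /eqP pl; exists (s' - s) => //; rewrite addrC subrK pl.
    by congr (_, _); rewrite addrC addKr.
  by case=> a Ma [-> ->]; rewrite addrC addKr Ma addrC subrK.
by rewrite card_imset // => a b [] /addrI.
Qed.

(* Lines l' whose slope differs from that of l by a unit meet l at most once;
   the others pass through a given point of l in exactly #|M| ways. *)
Lemma sum_common_incidences_le (L : {set R * R}) (l : R * R) :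
  (\sum_(l' in L) \sum_p (incident l p && incident l' p) <=
     #|L| + #|[set: R]| * #|M|)%N.
Proof.
pose common l' := (\sum_p (incident l p && incident l' p))%N.
have common_le l' : (common l' <= 1 + ((l'.1 - l.1)%R \in M) * common l')%N.
  have [slope_unit|/nonunit_in_M ->] := boolP (l'.1 - l.1 \is a GRing.unit); last first.
    by rewrite mul1n leq_addl.
  rewrite /common sum_bool_card; apply: leq_trans (card_meet_le1 slope_unit) _.
  by rewrite (eq_card (B := [set p | incident l p && incident l' p])) ?leq_addr //
    => p; rewrite !inE.
apply: (@leq_trans (\sum_(l' in L) (1 + ((l'.1 - l.1)%R \in M) * common l'))).
  by apply: leq_sum => l' _; apply: common_le.
rewrite big_split /= sum_nat_const muln1 leq_add2l.
apply: (@leq_trans (\sum_l' ((l'.1 - l.1)%R \in M) * common l')).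
  by rewrite [leqRHS](bigID (mem L)) /= leq_addr.
rewrite /common; under eq_bigr do rewrite big_distrr /=.
rewrite exchange_big /= -(sum_incident_line l) big_distrl /=.
apply: eq_leq; apply: eq_bigr => p _; case: (incident l p); last first.
  by rewrite big1 // => l' _; rewrite muln0.
rewrite mul1n -(card_pencil l.1 p) -sum1_card [RHS]big_mkcond /=.
by apply: eq_bigr => l' _; rewrite inE; case: (_ \in M); case: (incident l' p).
Qed.

Lemma sum_degree_sq_le (L : {set R * R}) :
  (\sum_p degree L p ^ 2 <= #|L| ^ 2 + #|L| * #|[set: R]| * #|M|)%N.
Proof.
have degree_sq p : (degree L p ^ 2 =
    \sum_(l in L) \sum_(l' in L) (incident l p && incident l' p))%N.
  rewrite /degree expnS expn1 big_distrl /=; apply: eq_bigr => l _.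
  by rewrite big_distrr /=; apply: eq_bigr => l' _; rewrite mulnb.
rewrite (eq_bigr _ (fun p _ => degree_sq p)) exchange_big /=.
rewrite expnS expn1 -mulnA -mulnDr -sum_nat_const; apply: leq_sum => l _.
by rewrite exchange_big; apply: sum_common_incidences_le.
Qed.

End Incidences.

Section Moments.
Variable F : realFieldType.

Lemma sum_affine_sq (T : finType) (A : {pred T}) (a : T -> F) (k S : F) :
  \sum_(i in A) (k * a i - S) ^+ 2 =
  k ^+ 2 * \sum_(i in A) a i ^+ 2 - 2 * k * S * \sum_(i in A) a i + S ^+ 2 * #|A|%:R.
Proof.
rewrite (eq_bigr (fun i => k ^+ 2 * a i ^+ 2 + (- (2 * k * S) * a i + S ^+ 2))); last first.
  by move=> i _; ring.
by rewrite !big_split /= -!mulr_sumr sumr_const -mulr_natr; ring.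
Qed.

Lemma cauchy_schwarz_sum (T : finType) (A : {pred T}) (a : T -> F) :
  (\sum_(i in A) a i) ^+ 2 <= #|A|%:R * \sum_(i in A) a i ^+ 2.
Proof.
set k : F := #|A|%:R; set S := \sum_(i in A) a i.
have [A0|A_gt0] := posnP #|A|.
  by rewrite /S big_pred0 => [|i]; rewrite ?(card0_eq A0) // expr0n /k A0 mul0r.
have k_gt0 : 0 < k by rewrite ltr0n.
have : 0 <= \sum_(i in A) (k * a i - S) ^+ 2 by apply: sumr_ge0 => i _; apply: sqr_ge0.
rewrite sum_affine_sq -/S -/k => sum_ge0.
have : 0 <= k * (k * \sum_(i in A) a i ^+ 2 - S ^+ 2) by lra.
by rewrite pmulr_rge0 //; lra.
Qed.

(* On n^2 points with mean degree N/n and a bounded second moment, the total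
   degree of any subset P is close to its expected value #|P| N / n. *)
Lemma sum_subset_deviation_le (T : finType) (d : T -> nat) (P : {pred T}) (n N K : nat) :
  #|T| = (n ^ 2)%N ->
  (\sum_p d p = N * n)%N ->
  (\sum_p d p ^ 2 <= N ^ 2 + N * n * K)%N ->
  ((n * \sum_(p in P) d p)%:R - (#|P| * N)%:R) ^+ 2 <= (#|P| * n ^ 3 * N * K)%:R :> F.
Proof.
move=> card_T sum_d sum_d2.
pose a p : F := n%:R * (d p)%:R - N%:R.
have -> : (n * \sum_(p in P) d p)%:R - (#|P| * N)%:R = \sum_(p in P) a p.
  rewrite /a sumrB -mulr_sumr -natr_sum sumr_const -mulr_natr !natrM; ring.
apply: le_trans (cauchy_schwarz_sum P a) _.
rewrite [X in _ <= X](_ : _ = #|P|%:R * (n ^ 3 * N * K)%:R); last by rewrite -natrM !mulnA.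
apply: ler_wpM2l => //; apply: (@le_trans _ _ (\sum_p a p ^+ 2)).
  rewrite [leRHS](bigID (mem P)) /= lerDl.
  by apply: sumr_ge0 => i _; apply: sqr_ge0.
rewrite /a (sum_affine_sq predT (fun p => (d p)%:R)) /= cardT -cardE card_T.
have -> : \sum_p ((d p)%:R : F) ^+ 2 = (\sum_p d p ^ 2)%:R.
  by rewrite natr_sum; apply: eq_bigr => p _; rewrite natrX.
rewrite -natr_sum sum_d.
move: sum_d2; rewrite -(ler_nat F) !natrM !natrD !natrX !natrM.
set x := (\sum_p d p ^ 2)%:R => sum_d2.
have : 0 <= n%:R :> F by [].
nra.
Qed.

End Moments.

Lemma few_incidences_bound (n N b I Pn : nat) :
  (0 < N)%N -> (N * b <= I)%N -> (n * I <= 2 * (Pn * N))%N -> (n * b <= 2 * Pn)%N.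
Proof.
move=> N_gt0 NbI small_I; rewrite -(leq_pmul2l N_gt0).
have : (n * (N * b) <= n * I)%N by rewrite leq_mul2l NbI orbT.
lia.
Qed.

Lemma many_incidences_bound (n K N b I Pn : nat) :
  (0 < n)%N -> (0 < N)%N -> (N * b <= I)%N -> (2 * (Pn * N) < n * I)%N ->
  ((n * I - Pn * N) ^ 2 <= Pn * n ^ 3 * N * K)%N ->
  (N * b ^ 2 <= 4 * Pn * n * K)%N.
Proof.
move=> n_gt0 N_gt0 NbI large_I deviation.
have nNb_le : (n * N * b <= 2 * (n * I - Pn * N))%N.
  have : (n * (N * b) <= n * I)%N by rewrite leq_mul2l NbI orbT.
  lia.
have : ((n * N * b) ^ 2 <= 4 * (Pn * n ^ 3 * N * K))%N.
  apply: leq_trans (_ : (2 * (n * I - Pn * N)) ^ 2 <= _)%N; first by rewrite leq_exp2r.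
  by rewrite expnMn leq_mul2l deviation orbT.
rewrite (_ : ((n * N * b) ^ 2 = (n * n * N) * (N * b ^ 2))%N); last by ring.
rewrite (_ : (4 * (Pn * n ^ 3 * N * K) = (n * n * N) * (4 * Pn * n * K))%N); last by ring.
by rewrite leq_pmul2l // !muln_gt0 n_gt0 N_gt0.
Qed.

(* With the junk value x / 0 = 0 both terms of the minimum vanish when m = 0. *)
Lemma min_bound_from_deviation (F : realFieldType) (n K a b c N I Pn m : nat) :
  (0 < n)%N -> (0 < K)%N -> (N * b <= I)%N -> (a * c <= N * m)%N ->
  ((n * I)%:R - (Pn * N)%:R) ^+ 2 <= (Pn * n ^ 3 * N * K)%:R :> F ->
  Num.min ((n * b)%:R / m%:R) ((a * b ^ 2 * c)%:R / (m ^ 2 * (n * K))%:R)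
    <= 4 * Pn%:R :> F.
Proof.
move=> n_gt0 K_gt0 NbI acN deviation.
have [->|m_gt0] := posnP m; first by rewrite invr0 mulr0 ge_min mulr_ge0.
have [N0|N_gt0] := posnP N.
  have -> : (a * b ^ 2 * c = 0)%N by move: acN; rewrite N0; nia.
  by rewrite ge_min mul0r mulr_ge0 ?orbT.
have [small_I|large_I] := leqP (n * I) (2 * (Pn * N)).
  rewrite ge_min; apply/orP; left.
  rewrite ler_pdivrMr ?ltr0n // -!natrM ler_nat.
  apply: leq_trans (few_incidences_bound N_gt0 NbI small_I) _.
  by rewrite -mulnA leq_mul // leq_pmulr.
have : ((n * I - Pn * N) ^ 2 <= Pn * n ^ 3 * N * K)%N.
  by rewrite -(ler_nat F) natrX natrB //; apply: leq_trans (ltnW large_I); lia.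
move/(many_incidences_bound n_gt0 N_gt0 NbI large_I) => NbK.
rewrite ge_min; apply/orP; right.
rewrite ler_pdivrMr ?ltr0n ?muln_gt0 ?expn_gt0 ?m_gt0 ?n_gt0 ?K_gt0 // -!natrM ler_nat.
apply: (@leq_trans (N * m * b ^ 2)); first by rewrite mulnAC leq_mul2r acN orbT.
rewrite mulnAC; apply: leq_trans (leq_mul NbK (leqnn m)) _.
by rewrite (_ : (4 * Pn * (m ^ 2 * (n * K)) = 4 * Pn * n * K * m * m)%N) ?leq_pmulr //; ring.
Qed.

Section PointsAndLines.
Variables (R : finComUnitRingType) (g h : {unit R} -> {unit R}).
Variables (A B C : {set {unit R}}).

Definition lines : {set R * R} :=
  [set (val (g x) / val c, val (g x) * val (h x)) | x in A, c in C].

Definition points : {set R * R} :=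
  setX [set val (g x) * (val (h x) + val y) | x in A, y in B]
       [set val u | u in [set (x * y)%g | x in B, y in C]].

Lemma incidences_ge : (#|lines| * #|B| <= \sum_(p in points) degree lines p)%N.
Proof.
rewrite /degree exchange_big /= -sum_nat_const.
apply: leq_sum => _ /imset2P[x c Ax Cc ->]; rewrite sum_bool_card.
pose on_line (b : {unit R}) := (val (g x) * (val (h x) + val b), val (b * c)%g).
have -> : #|B| = #|on_line @: B|.
  by rewrite card_imset // => b b' [] /(mulrI (valP (g x))) /addrI /val_inj.
apply: subset_leq_card; apply/subsetP => _ /imsetP[b Bb ->]; rewrite !inE /=.
apply/andP; split; first (apply/andP; split).
- by apply/imset2P; exists x b.
- by apply/imsetP; exists (b * c)%g => //; apply/imset2P; exists b c.
- rewrite /incident /= mulrDr addrC; apply/eqP; congr (_ + _).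
  by rewrite (mulrC (val b)) -mulrA mulKr // (valP c).
Qed.

Lemma card_lines_ge (G : {set {unit R}}) : A \subset G ->
  (#|A| * #|C| <= #|lines| * mu G (fun x => (val (g x) * val (h x))%R))%N.
Proof.
move=> sAG; rewrite -cardsX.
pose line (p : {unit R} * {unit R}) := (val (g p.1) / val p.2, val (g p.1) * val (h p.1)).
have -> : lines = line @: setX A C by rewrite /lines curry_imset2X; apply: eq_imset => -[].
apply: card_le_by_fibres => p0 _.
pose fibre := [set p in setX A C | line p == line p0].
apply: (@leq_trans #|[set p.1 | p in fibre]|).
  rewrite card_in_imset // => -[x c] [x' c']; rewrite !inE /=.
  move=> /andP[_ /eqP line_xc] /andP[_ /eqP line_x'c'] /= xx'; subst x'.
  rewrite -line_x'c' in line_xc.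
  by case: line_xc => /(mulrI (valP (g x))) /invr_inj /val_inj ->.
apply: (@leq_trans #|[set x in G | val (g x) * val (h x) == (line p0).2]|).
  apply: subset_leq_card; apply/subsetP => x /imsetP[p].
  rewrite !inE => /andP[/andP[Ap _] /eqP line_p] ->.
  by rewrite (subsetP sAG) // -line_p eqxx.
exact: (leq_bigmax (F := fun t => #|[set x in G | val (g x) * val (h x) == t]|)).
Qed.

End PointsAndLines.

Unset Implicit Arguments.

Theorem theorem1p10 (F : realFieldType) (r : nat) :
  exists c : F, 0 < c /\
  forall (R : finComUnitRingType) (z : R),
    finite_valuation_ring R -> uniformizer z -> nil_degree z r ->
  forall (G : {group {unit R}}) (g h : {unit R} -> {unit R})
         (A B C : {set {unit R}}),
    A \subset G ->
    let q := residue_card z in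
    let m := mu G (fun x => val (g x) * val (h x)) in
    let fAB := [set val (g x) * (val (h x) + val y) | x in A, y in B] in
    let BC := [set (x * y)%g | x in B, y in C] in
    c * Num.min ((q ^ r * #|B|)%:R / m%:R)
                ((#|A| * #|B| ^ 2 * #|C|)%:R / (m ^ 2 * q ^ (2 * r - 1))%:R)
      <= (#|fAB| * #|BC|)%:R.
Proof.
exists (1 / 4); split; first by lra.
move=> R z [R_local _] z_unif z_nil G g h A B C sAG; cbv zeta.
set fAB := [set _ | x in A, y in B]; set BC := [set _ | x in B, y in C].
have card_points : #|points g h A B C| = (#|fAB| * #|BC|)%N.
  by rewrite cardsX card_imset //; apply: val_inj.
have card_R := card_valuation_ring R_local z_unif z_nil.
have card_RR : #|{: R * R}| = (#|[set: R]| ^ 2)%N by rewrite card_prod -cardsT mulnn.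
have R_gt0 : (0 < #|[set: R]|)%N by apply/card_gt0P; exists 0.
have M_gt0 : (0 < #|pideal z|)%N by apply/card_gt0P; exists 0; apply: pideal0.
have deviation := sum_subset_deviation_le F (points g h A B C) card_RR
  (sum_degree (lines g h A C))
  (sum_degree_sq_le (fun x => nonunit_in_uniformizer_ideal R_local z_unif) (lines g h A C)).
have := min_bound_from_deviation R_gt0 M_gt0 (incidences_ge g h A B C)
  (card_lines_ge g h C sAG) deviation.
rewrite card_points card_R (card_uniformizer_ideal R_local z_unif z_nil) -expnD.
rewrite (_ : (r + r.-1 = 2 * r - 1)%N); last by have := nil_degree_gt0 z_nil; lia.
lra.
Qed.
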